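(* Let $\xi=(\tau_L,\delta_L,\tau_R,\delta_R)\in\Phi$. If $J_1(\xi)>1$ then $\phi(g(\xi))<0$.
   Context: Let $\Phi=\{\xi\in\mathbb{R}^4: \tau_L>\delta_L+1,\ \delta_L>0,\ \tau_R<-(\delta_R+1),\ \delta_R>0\}$. For $\xi\in\Phi$, the matrix $\begin{bmatrix}\tau_L&1\\-\delta_L&0\end{bmatrix}$ has real eigenvalues $0<\lambda_L^s<1<\lambda_L^u$ and $\begin{bmatrix}\tau_R&1\\-\delta_R&0\end{bmatrix}$ has real eigenvalues $\lambda_R^u<-1<\lambda_R^s<0$. Define $\phi(\xi)=\delta_R-\left(\tau_R+\delta_L+\delta_R-(1+\tau_R)\lambda_L^u\right)\lambda_L^u$ (with $\lambda_L^u$ computed from the first and second components of $\xi$), $J_1(\xi)=\frac{\lambda_L^u(\lambda_R^u)^2}{\lambda_L^u+|\lambda_R^u|}$, and $g:\Phi\to\Phi$, $g(\xi)=\left(\tau_R^2-2\delta_R,\ \delta_R^2,\ \tau_L\tau_R-\delta_L-\delta_R,\ \delta_L\delta_R\right)$. *)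

From Stdlib Require Import Reals.
Open Scope R_scope.

Definition Xi : Type := (R * R * R * R)%type.

Definition inPhi (x : Xi) : Prop :=
  let '(tL, dL, tR, dR) := x in
  tL > dL + 1 /\ dL > 0 /\ tR < - (dR + 1) /\ dR > 0.

(* Eigenvalues of [[t, 1], [-d, 0]] are the roots of z^2 - t z + d,
   i.e. (t +/- sqrt(t^2 - 4 d)) / 2.
   lamLu: the larger root (lambda_L^u > 1 when t > d + 1, d > 0).
   lamRu: the smaller root (lambda_R^u < -1 when t < -(d + 1), d > 0). *)
Definition lamLu (t d : R) : R := (t + sqrt (t * t - 4 * d)) / 2.
Definition lamRu (t d : R) : R := (t - sqrt (t * t - 4 * d)) / 2.

Definition phi (x : Xi) : R :=
  let '(tL, dL, tR, dR) := x in
  dR - (tR + dL + dR - (1 + tR) * lamLu tL dL) * lamLu tL dL.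

Definition J1 (x : Xi) : R :=
  let '(tL, dL, tR, dR) := x in
  lamLu tL dL * (lamRu tR dR) ^ 2 / (lamLu tL dL + Rabs (lamRu tR dR)).

Definition g (x : Xi) : Xi :=
  let '(tL, dL, tR, dR) := x in
  (tR ^ 2 - 2 * dR, dR ^ 2, tL * tR - dL - dR, dL * dR).

(* Write tau_L = p + q, delta_L = p q with 0 < q < 1 < p = lambda_L^u, and
   tau_R = a + b, delta_R = a b with a = lambda_R^u < -1 < b < 0.  The left
   matrix of g(xi) then has eigenvalues a^2 and b^2, so its lambda_L^u is a^2,
   and J_1(xi) > 1 reads p a^2 > p - a.  In these coordinates phi(g(xi)) is
   -a^4 b^2 plus an expression that is bilinear in (q, -b) in the unit square;
   it is negative at the four corners (at q = b = 0 precisely because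
   J_1(xi) > 1), hence on the whole square. *)
From Stdlib Require Import Reals Lra Psatz.
Open Scope R_scope.

Lemma sqrt_discr_roots (p q : R) :
  sqrt ((p + q) * (p + q) - 4 * (p * q)) = Rabs (p - q).
Proof.
  rewrite <- sqrt_Rsqr_abs; f_equal; unfold Rsqr; ring.
Qed.

Lemma lamLu_roots (p q : R) : q <= p -> lamLu (p + q) (p * q) = p.
Proof.
  intros Hqp; unfold lamLu.
  rewrite sqrt_discr_roots, Rabs_right by lra; field.
Qed.

Lemma lamRu_roots (a b : R) : a <= b -> lamRu (a + b) (a * b) = a.
Proof.
  intros Hab; unfold lamRu.
  rewrite sqrt_discr_roots, Rabs_left1 by lra; field.
Qed.

Lemma lamLu_add_lamRu (t d : R) : lamLu t d + lamRu t d = t.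
Proof. unfold lamLu, lamRu; field. Qed.

Lemma lamLu_mul_lamRu (t d : R) :
  0 <= t * t - 4 * d -> lamLu t d * lamRu t d = d.
Proof.
  intros HD; unfold lamLu, lamRu.
  pose proof (sqrt_sqrt _ HD); nra.
Qed.

Lemma lamRu_le_lamLu (t d : R) : lamRu t d <= lamLu t d.
Proof. unfold lamLu, lamRu; pose proof (sqrt_pos (t * t - 4 * d)); lra. Qed.

Lemma discr_pos_of_trace_gt (t d : R) : (d + 1) ^ 2 < t ^ 2 -> 0 < t * t - 4 * d.
Proof. intros H; pose proof (pow2_ge_0 (d - 1)); nra. Qed.

Lemma roots_straddle (x p q : R) : q <= p -> (p - x) * (q - x) < 0 -> q < x < p.
Proof. intros; split; nra. Qed.

(* The roots straddle 1 because z^2 - t z + d is negative at z = 1. *)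
Lemma saddle_roots (t d : R) : d + 1 < t -> 0 < d ->
  exists p q, t = p + q /\ d = p * q /\ 1 < p /\ 0 < q < 1.
Proof.
  intros Ht Hd.
  assert (HD : 0 <= t * t - 4 * d) by (apply Rlt_le, discr_pos_of_trace_gt; nra).
  exists (lamLu t d), (lamRu t d).
  pose proof (lamLu_add_lamRu t d) as Hsum.
  pose proof (lamLu_mul_lamRu t d HD) as Hprod.
  assert (Hst : lamRu t d < 1 < lamLu t d).
  { apply roots_straddle; [apply lamRu_le_lamLu | nra]. }
  repeat split; try lra; nra.
Qed.

Lemma saddle_roots_neg (t d : R) : t < - (d + 1) -> 0 < d ->
  exists a b, t = a + b /\ d = a * b /\ a < -1 /\ -1 < b < 0.
Proof.
  intros Ht Hd.
  destruct (saddle_roots (- t) d) as (p & q & Et & Ed & Hp & Hq); try lra.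
  exists (- p), (- q); repeat split; lra || nra.
Qed.

Lemma J1_roots (p q a b : R) : q <= p -> a <= b ->
  J1 (p + q, p * q, a + b, a * b) = p * a ^ 2 / (p + Rabs a).
Proof.
  intros Hqp Hab; unfold J1.
  rewrite lamLu_roots, lamRu_roots by assumption; reflexivity.
Qed.

(* phi(g(xi)) without its term -a^4 b^2, with s = -b. *)
Definition phi_g_bilin (p a q s : R) : R :=
  - p * q * (a * s)
  - ((p + q) * (a - s) - p * q + a * s - p * q * (a * s)
     - (1 + (p + q) * (a - s) - p * q + a * s) * a ^ 2) * a ^ 2.

Lemma phi_g_roots (p q a b : R) : b ^ 2 <= a ^ 2 ->
  phi (g (p + q, p * q, a + b, a * b)) = phi_g_bilin p a q (- b) - a ^ 4 * b ^ 2.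
Proof.
  intros Hba; unfold phi, g, phi_g_bilin.
  replace ((a + b) ^ 2 - 2 * (a * b)) with (a ^ 2 + b ^ 2) by ring.
  replace ((a * b) ^ 2) with (a ^ 2 * b ^ 2) by ring.
  rewrite lamLu_roots by assumption; ring.
Qed.

Lemma convex_comb_lt0 (t u v : R) :
  0 <= t <= 1 -> u < 0 -> v < 0 -> (1 - t) * u + t * v < 0.
Proof. intros; nra. Qed.

Lemma bilinear_lt0_on_unit_square (F : R -> R -> R) (x y : R) :
  (forall x y, F x y = (1 - x) * (1 - y) * F 0 0 + (1 - x) * y * F 0 1
                       + x * (1 - y) * F 1 0 + x * y * F 1 1) ->
  0 <= x <= 1 -> 0 <= y <= 1 ->
  F 0 0 < 0 -> F 0 1 < 0 -> F 1 0 < 0 -> F 1 1 < 0 -> F x y < 0.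
Proof.
  intros HF Hx Hy H00 H01 H10 H11; rewrite HF.
  replace (_ + _) with ((1 - x) * ((1 - y) * F 0 0 + y * F 0 1)
                        + x * ((1 - y) * F 1 0 + y * F 1 1)) by ring.
  apply convex_comb_lt0; [assumption | |]; apply convex_comb_lt0; assumption.
Qed.

Lemma phi_g_bilin_lt0 (p a q s : R) :
  1 < p -> a < -1 -> p - a < p * a ^ 2 ->
  0 <= q <= 1 -> 0 <= s <= 1 -> phi_g_bilin p a q s < 0.
Proof.
  intros Hp Ha HJ Hq Hs.
  assert (Ha2 : 0 < a ^ 2 - 1) by nra.
  assert (HK : - a < p * (a ^ 2 - 1)) by nra.
  apply (bilinear_lt0_on_unit_square (phi_g_bilin p a)); try assumption;
    unfold phi_g_bilin.
  - intros; ring.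
  - assert (a ^ 3 < 0) by nra.
    replace (_ - _) with (a ^ 3 * (p * a ^ 2 - p + a)) by ring; nra.
  - replace (_ - _) with (a ^ 2 * ((1 + a + p * (a - 1)) * (a ^ 2 - 1) + 1)) by ring.
    assert ((1 + a) * (a ^ 2 - 1) < 0) by nra.
    assert ((a - 1) * (p * (a ^ 2 - 1)) < (a - 1) * - a) by nra.
    nra.
  - replace (_ - _) with (a ^ 2 * ((1 - p + (p + 1) * a) * (a ^ 2 - 1) + 1)) by ring.
    assert ((1 - p + (p + 1) * a) * (a ^ 2 - 1) < - 2 * p * (a ^ 2 - 1)) by nra.
    nra.
  - replace (_ - _) with (p * a * (a ^ 2 - 1)
                          + a ^ 2 * ((p * (a - 2) + 2 * a) * (a ^ 2 - 1) + 1)) by ring.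
    assert (p * a * (a ^ 2 - 1) < 0) by nra.
    assert ((p * (a - 2) + 2 * a) * (a ^ 2 - 1) < - 3 * p * (a ^ 2 - 1)) by nra.
    nra.
Qed.

Theorem lemma5p2 (tL dL tR dR : R) :
  inPhi (tL, dL, tR, dR) ->
  J1 (tL, dL, tR, dR) > 1 ->
  phi (g (tL, dL, tR, dR)) < 0.
Proof.
  intros (HtL & HdL & HtR & HdR) HJ.
  destruct (saddle_roots tL dL HtL HdL) as (p & q & -> & -> & Hp & Hq).
  destruct (saddle_roots_neg tR dR HtR HdR) as (a & b & -> & -> & Ha & Hb).
  rewrite J1_roots, Rabs_left in HJ by lra.
  assert (HJ' : p - a < p * a ^ 2).
  { replace (p * a ^ 2) with (p * a ^ 2 / (p + - a) * (p + - a)) by (field; lra).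
    nra. }
  rewrite phi_g_roots by nra.
  pose proof (phi_g_bilin_lt0 p a q (- b) Hp Ha HJ' ltac:(lra) ltac:(lra)).
  pose proof (pow2_ge_0 b); pose proof (pow2_ge_0 (a ^ 2)).
  nra.
Qed.
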